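(* Let $Q$ be a connected natural join query over binary relations $R_1,\dots,R_\ell$, and let $J$ be a database instance together with a designation, for each relation $R_i$, of one of its two attributes as its light attribute. Run the join-ordering procedure described in the context on $(Q,J)$, resolving every nondeterministic choice arbitrarily. Then the procedure terminates. At termination the collection $\mathcal{C}$ contains exactly one component $(c,T_c)$, and $T_c=Q(J)$, i.e. $T_c$ is the natural join of all relations $R_1^J,\dots,R_\ell^J$.
   Context: A natural join query over binary relations consists of relation symbols $R_1,\dots,R_\ell$, each having exactly two distinct attributes. The answer $Q(J)$ on an instance $J$ is the natural join of all $R_i^J$. Relations are sets of tuples, so there are no duplicates. The query graph has one vertex per attribute and one edge $\{A,B\}$ per relation $R(A,B)$. $Q$ is connected if its query graph is connected. Join-ordering procedure. It maintains a collection $\mathcal{C}$ of components $(c,T_c)$, where $c$ is a set of attributes and $T_c$ is a relation over attribute set $c$. Initially $\mathcal{C}=\emptyset$ and every relation is marked unused. Outer loop: while there exist an attribute $X$ that lies in no component's attribute set and an unused relation $R$ whose light attribute is $X$, do the following four steps. (i) Let $Y$ be the other attribute of $R$. Set $c:=\{X,Y\}$ and $T_c:=R^J$, and mark $R$ used. (ii) While there is an unused relation $R'$ whose light attribute lies in $c$: set $T_c:=T_c\bowtie R'^J$, set $c:=c\cup\operatorname{attr}(R')$, and mark $R'$ used. Such a join is called a light join. (iii) While there is a component $(c',T_{c'})\in\mathcal{C}$ with $c\cap c'\neq\emptyset$: set $T_c:=T_c\bowtie T_{c'}$, set $c:=c\cup c'$, and remove $(c',T_{c'})$ from $\mathcal{C}$.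 (iv) Add $(c,T_c)$ to $\mathcal{C}$. When the outer loop ends, the procedure outputs $T_c$ for the component in $\mathcal{C}$. *)

From mathcomp Require Import all_boot.
From Stdlib Require List.
Set Implicit Arguments. Unset Strict Implicit. Unset Printing Implicit Defensive.

Section JoinOrdering.
(* A : attributes, V : data values, l : number of relation symbols R_1..R_l.
   att i = (first attribute, second attribute) of R_i.
   lightfst i = true iff the first attribute of R_i is its light attribute.
   J i x y <-> the tuple (first := x, second := y) is in R_i^J. *)
Variables (A : finType) (V : Type) (l : nat).
Variables (att : 'I_l -> A * A) (lightfst : 'I_l -> bool) (J : 'I_l -> V -> V -> Prop).

(* A tuple is a partial assignment of values to attributes; its attribute
   set is the set of attributes where it is defined. *)
Definition tuple := A -> option V.
Definition relation := tuple -> Prop.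

Definition over (c : {set A}) (t : tuple) : Prop :=
  forall x, isSome (t x) = (x \in c).

Definition restr (c : {set A}) (t : tuple) : tuple :=
  fun x => if x \in c then t x else None.

Definition njoin (c1 : {set A}) (T1 : relation) (c2 : {set A}) (T2 : relation)
  : relation :=
  fun t => over (c1 :|: c2) t /\ T1 (restr c1 t) /\ T2 (restr c2 t).

Definition attrset (i : 'I_l) : {set A} := [set (att i).1; (att i).2].
Definition light (i : 'I_l) : A := if lightfst i then (att i).1 else (att i).2.

Definition relOf (i : 'I_l) : relation :=
  fun t => over (attrset i) t /\
    exists x y, t (att i).1 = Some x /\ t (att i).2 = Some y /\ J i x y.

Definition qattrs : {set A} := \bigcup_(i < l) attrset i.

Definition QJ : relation :=
  fun t => over qattrs t /\ forall i, relOf i (restr (attrset i) t).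

Definition qedge : rel A := fun x y =>
  [exists i, (((att i).1 == x) && ((att i).2 == y))
          || (((att i).1 == y) && ((att i).2 == x))].
Definition connected_query : Prop :=
  forall x y, x \in qattrs -> y \in qattrs -> connect qedge x y.

Record comp := Comp { cattr : {set A}; crel : relation }.

(* States of the procedure: Outer = at the test of the outer loop;
   Light = inside step (ii); Merge = inside step (iii). *)
Inductive state :=
| Outer of seq comp & {set 'I_l}
| Light of seq comp & {set 'I_l} & {set A} & relation
| Merge of seq comp & {set 'I_l} & {set A} & relation.

Implicit Types (C : seq comp) (u : {set 'I_l}) (c : {set A}) (T : relation) (p : comp) (i : 'I_l).
Inductive step : state -> state -> Prop :=
| st_start C u i :
    (forall p, List.In p C -> light i \notin cattr p) -> i \notin u ->
    step (Outer C u) (Light C (i |: u) (attrset i) (relOf i))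
| st_light C u c T i :
    i \notin u -> light i \in c ->
    step (Light C u c T)
         (Light C (i |: u) (c :|: attrset i) (njoin c T (attrset i) (relOf i)))
| st_light_done C u c T :
    (forall i, i \notin u -> light i \notin c) ->
    step (Light C u c T) (Merge C u c T)
| st_merge C1 C2 p u c T :
    c :&: cattr p != set0 ->
    step (Merge (C1 ++ p :: C2) u c T)
         (Merge (C1 ++ C2) u (c :|: cattr p) (njoin c T (cattr p) (crel p)))
| st_merge_done C u c T :
    (forall p, List.In p C -> c :&: cattr p = set0) ->
    step (Merge C u c T) (Outer (Comp c T :: C) u).

Definition init : state := Outer [::] set0.

Inductive reachable : state -> Prop :=
| reach_init : reachable init
| reach_step s s' : reachable s -> step s s' -> reachable s'.

End JoinOrdering.

(* Along every run, each component (c, T) has a nonempty attribute set inside the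
   query, and T contains every tuple over c satisfying all relations lying in c;
   every used relation is enforced by some component; components are pairwise
   disjoint; and no unused relation has its light attribute in a component, since
   step (ii) exhausts those when a component is formed and merging only unites
   closed components.  Each start or light join uses a relation and each merge
   shortens the list of components, so every run terminates.  At a final state
   the last invariant forces all relations to be used; each relation then lies in
   one component, so the disjoint components are unions of connected pieces of the
   query graph and connectivity leaves a single one, whose relation is Q(J). *)

From Stdlib Require List FunctionalExtensionality.
From Pilot Require Import Defs.
From mathcomp Require Import all_boot.
Set Implicit Arguments. Unset Strict Implicit. Unset Printing Implicit Defensive.

Lemma all_In (T : Type) (a : pred T) (s : seq T) :
  all a s <-> (forall x, List.In x s -> a x).
Proof.
elim: s => [|y s IHs] //=; split.
  by case/andP=> ay /IHs ha x [<-|]; last exact: ha.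
by move=> h; rewrite h /=; [apply/IHs => x sx; apply: h; right | left].
Qed.

Lemma In_cat_cons (T : Type) (x y : T) (s1 s2 : seq T) :
  List.In x (s1 ++ y :: s2) <-> x = y \/ List.In x (s1 ++ s2).
Proof.
rewrite !List.in_app_iff /=; split; first by case=> [|[|]]; auto.
by case=> [|[|]]; auto.
Qed.

Lemma pairwise_cat_cons (T : Type) (r : rel T) (x : T) (s1 s2 : seq T) :
  pairwise r (s1 ++ x :: s2) -> pairwise r (s1 ++ s2).
Proof.
rewrite !pairwise_cat pairwise_cons allrel_consr.
by case/and3P=> /andP[_ ->] -> /andP[_ ->].
Qed.

Section Tuples.
Variables (A : finType) (V : Type).
Implicit Types (c : {set A}) (t : Defs.tuple A V).

Lemma restr_restr c c' t : c' \subset c -> restr c' (restr c t) = restr c' t.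
Proof.
move=> sc'c; apply: FunctionalExtensionality.functional_extensionality => x.
by rewrite /restr; case: ifP => // /(subsetP sc'c) ->.
Qed.

Lemma restr_id c t : Defs.over c t -> restr c t = t.
Proof.
move=> ct; apply: FunctionalExtensionality.functional_extensionality => x.
by rewrite /restr; case: ifP => // xNc; move: (ct x); rewrite xNc; case: (t x).
Qed.

Lemma over_restr c c' t : c' \subset c -> Defs.over c t -> Defs.over c' (restr c' t).
Proof.
by move=> sc'c ct x; rewrite /restr; case: ifP => // /(subsetP sc'c); rewrite ct.
Qed.

End Tuples.

Section Procedure.
Variables (A : finType) (V : Type) (l : nat).
Variables (att : 'I_l -> A * A) (lightfst : 'I_l -> bool) (J : 'I_l -> V -> V -> Prop).

Local Notation step := (step att lightfst J).
Local Notation attrset := (attrset att).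
Local Notation relOf := (relOf att J).
Local Notation light := (light att lightfst).
Local Notation qattrs := (qattrs att).
Local Notation comp := (Defs.comp A V).
Implicit Types (c : {set A}) (T : relation A V) (C : seq comp) (u : {set 'I_l}).

(* [T] contains the join of all relations whose attributes lie in [c]; the
   converse inclusion is only tracked for the relations already joined, via
   [enforces], since [c] may also span relations not yet used. *)
Record wf_comp c T : Prop := WfComp {
  wf_sub : c \subset qattrs;
  wf_nonempty : c != set0;
  wf_over : forall t, T t -> Defs.over c t;
  wf_complete : forall t, Defs.over c t ->
    (forall i, attrset i \subset c -> relOf i (restr (attrset i) t)) -> T t }.

Definition enforces c T i :=
  attrset i \subset c /\ forall t, T t -> relOf i (restr (attrset i) t).

Lemma wf_comp_rel i : wf_comp (attrset i) (relOf i).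
Proof.
split=> [|||t ti hrel]; first exact: (bigcup_sup i).
- by apply/set0Pn; exists (att i).1; rewrite set21.
- by move=> t [].
- by move: (hrel i (subxx _)); rewrite restr_id.
Qed.

Lemma enforces_rel i : enforces (attrset i) (relOf i) i.
Proof. by split=> // t [ti rt]; rewrite restr_id. Qed.

Lemma wf_comp_join c1 T1 c2 T2 :
  wf_comp c1 T1 -> wf_comp c2 T2 -> wf_comp (c1 :|: c2) (njoin c1 T1 c2 T2).
Proof.
case=> s1 /set0Pn[x x1] _ h1 [s2 _ _ h2]; split=> [|||t tc hrel].
- by rewrite subUset s1 s2.
- by apply/set0Pn; exists x; rewrite in_setU x1.
- by move=> t [].
have restr_rel c : c \subset c1 :|: c2 ->
    forall i, attrset i \subset c -> relOf i (restr (attrset i) (restr c t)).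
  by move=> sc i si; rewrite restr_restr //; apply: hrel (subset_trans si sc).
split=> //; split.
  by apply: h1 (over_restr (subsetUl _ _) tc) (restr_rel _ (subsetUl _ _)).
by apply: h2 (over_restr (subsetUr _ _) tc) (restr_rel _ (subsetUr _ _)).
Qed.

Lemma enforces_joinl c1 T1 c2 T2 i :
  enforces c1 T1 i -> enforces (c1 :|: c2) (njoin c1 T1 c2 T2) i.
Proof.
case=> si h; split=> [|t [_ [t1 _]]]; first exact: subset_trans si (subsetUl _ _).
by rewrite -(restr_restr _ si); apply: h.
Qed.

Lemma enforces_joinr c1 T1 c2 T2 i :
  enforces c2 T2 i -> enforces (c1 :|: c2) (njoin c1 T1 c2 T2) i.
Proof.
case=> si h; split=> [|t [_ [_ t2]]]; first exact: subset_trans si (subsetUr _ _).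
by rewrite -(restr_restr _ si); apply: h.
Qed.

Lemma wf_comp_QJ c T :
  wf_comp c T -> (forall i, enforces c T i) -> forall t, T t <-> QJ att J t.
Proof.
case=> sc _ Tover Tcomplete enf.
have qc : c = qattrs.
  by apply/eqP; rewrite eqEsubset sc; apply/bigcupsP => i _; case: (enf i).
move=> t; rewrite /QJ -qc; split=> [Tt | [tc hrel]]; last exact: Tcomplete.
by split=> [|i]; [apply: Tover | case: (enf i) => _; apply].
Qed.

Definition wf_comps C := forall p, List.In p C -> wf_comp (cattr p) (crel p).

Definition disjoint_comps C :=
  pairwise (fun p q : comp => [disjoint cattr p & cattr q]) C.

Definition light_closed C u :=
  forall i, i \notin u -> forall p, List.In p C -> light i \notin cattr p.

Definition covers C u :=
  forall i, i \in u -> exists2 p, List.In p C & enforces (cattr p) (crel p) i.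

(* In [Light] and [Merge] states the component under construction is the head
   of the list; it becomes disjoint from the others only once merging ends. *)
Definition invariant (s : state A V l) : Prop :=
  match s with
  | Outer C u => [/\ wf_comps C, disjoint_comps C, light_closed C u & covers C u]
  | Light C u c T => [/\ wf_comps (Comp c T :: C), disjoint_comps C,
                         light_closed C u & covers (Comp c T :: C) u]
  | Merge C u c T => [/\ wf_comps (Comp c T :: C), disjoint_comps C,
                         light_closed (Comp c T :: C) u & covers (Comp c T :: C) u]
  end.

Lemma light_closedU1 C u i : light_closed C u -> light_closed C (i |: u).
Proof. by move=> lc j; rewrite in_setU1 negb_or => /andP[_]; apply: lc. Qed.

Lemma covers_cons p C u : covers C u -> covers (p :: C) u.
Proof. by move=> cov i /cov[q qC]; exists q => //; right. Qed.

Lemma coversU1 c T C u i :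
  enforces c T i -> covers (Comp c T :: C) u -> covers (Comp c T :: C) (i |: u).
Proof.
move=> enf cov j; rewrite in_setU1 => /orP[/eqP->|/cov//].
by exists (Comp c T) => //; left.
Qed.

Lemma covers_head c T c' T' C u :
  (forall i, enforces c T i -> enforces c' T' i) ->
  covers (Comp c T :: C) u -> covers (Comp c' T' :: C) u.
Proof.
move=> enf cov i /cov[q [<-|qC] qi]; first by exists (Comp c' T'); [left | apply: enf].
by exists q => //; right.
Qed.

Lemma invariant_start C u i :
  invariant (Outer C u) -> invariant (Light C (i |: u) (attrset i) (relOf i)).
Proof.
move=> [wfC dC lcC cov]; split=> //; last 1 first.
- by apply: coversU1 (enforces_rel i) (covers_cons _ cov).
- by move=> p [<-|]; [apply: wf_comp_rel | apply: (wfC p)].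
- exact: light_closedU1.
Qed.

Lemma invariant_light C u c T i :
  invariant (Light C u c T) ->
  invariant (Light C (i |: u) (c :|: attrset i) (njoin c T (attrset i) (relOf i))).
Proof.
move=> [wfC dC lcC cov]; split=> //; last 1 first.
- apply: coversU1; first by apply: enforces_joinr; apply: enforces_rel.
  by apply: covers_head cov => k; apply: enforces_joinl.
- move=> p [<-|pC]; last by apply: (wfC p); right.
  by apply: wf_comp_join (wf_comp_rel i); apply: (wfC (Comp c T)); left.
- exact: light_closedU1.
Qed.

Lemma invariant_light_done C u c T :
  (forall i, i \notin u -> light i \notin c) ->
  invariant (Light C u c T) -> invariant (Merge C u c T).
Proof.
move=> lc [wfC dC lcC cov]; split=> // i iu p [<-|]; [exact: lc | exact: lcC].
Qed.

Lemma invariant_merge C1 C2 p u c T :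
  invariant (Merge (C1 ++ p :: C2) u c T) ->
  invariant (Merge (C1 ++ C2) u (c :|: cattr p) (njoin c T (cattr p) (crel p))).
Proof.
move=> [wfC dC lcC cov].
have inC q : q = Comp c T \/ q = p \/ List.In q (C1 ++ C2) ->
    List.In q (Comp c T :: C1 ++ p :: C2).
  by case=> [->|/In_cat_cons]; [left | right].
split.
- move=> q [<-|qC]; last by apply: (wfC q); apply: inC; auto.
  by apply: wf_comp_join; [apply: (wfC (Comp c T)) | apply: (wfC p)]; apply: inC; auto.
- exact: pairwise_cat_cons dC.
- move=> i iu q [<-|qC]; last by apply: (lcC i iu q); apply: inC; auto.
  by rewrite in_setU negb_or (lcC i iu (Comp c T)) ?(lcC i iu p) //; apply: inC; auto.
move=> i /cov[q /= [<-|/In_cat_cons[->|qC]] qi]; last by exists q => //; right.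
all: exists (Comp (c :|: cattr p) (njoin c T (cattr p) (crel p))); first by left.
- exact: enforces_joinl.
- exact: enforces_joinr.
Qed.

Lemma invariant_merge_done C u c T :
  (forall p, List.In p C -> c :&: cattr p = set0) ->
  invariant (Merge C u c T) -> invariant (Outer (Comp c T :: C) u).
Proof.
move=> disj [wfC dC lcC cov]; split=> //.
apply/andP; split=> //.
by apply/all_In => p /disj /eqP; rewrite setI_eq0.
Qed.

Lemma invariant_step s s' : step s s' -> invariant s -> invariant s'.
Proof.
case=> [C u i _ _|C u c T i _ _|C u c T lc|C1 C2 p u c T _|C u c T disj].
- exact: invariant_start.
- exact: invariant_light.
- exact: invariant_light_done lc.
- exact: invariant_merge.
- exact: invariant_merge_done disj.
Qed.

Lemma reachable_invariant s : reachable att lightfst J s -> invariant s.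
Proof.
elim=> [|s0 s1 _ IH st]; last exact: invariant_step st IH.
by split=> // i; rewrite in_set0.
Qed.

Local Notation acc := (Acc (fun s' s => step s s')).

Definition used (s : state A V l) : {set 'I_l} :=
  match s with Outer _ u | Light _ u _ _ | Merge _ u _ _ => u end.

Lemma card_unusedU1 u i : i \notin u -> #|~: (i |: u)| < #|~: u|.
Proof. by move=> iu; apply: proper_card; rewrite properC properUr // sub1set. Qed.

Lemma acc_merge u :
  (forall C, acc (Outer C u)) -> forall C c T, acc (Merge C u c T).
Proof.
move=> accO C; have [n] := ubnP (size C).
elim: n C => [|n IHn] C sizeC c T; first by rewrite ltn0 in sizeC.
constructor=> s' st; inversion st; subst; last exact: accO.
by apply: IHn; move: sizeC; rewrite !size_cat /= addnS ltnS.
Qed.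

Lemma acc_used u : (forall s, #|~: used s| < #|~: u| -> acc s) ->
  forall s, used s = u -> acc s.
Proof.
move=> IH; have accO C : acc (Outer C u).
  by constructor=> s' st; inversion st; subst; apply: IH; exact: card_unusedU1.
case=> [C _|C _ c T|C _ c T] /= ->; [exact: accO | | exact: acc_merge].
constructor=> s' st; inversion st; subst; last exact: acc_merge.
by apply: IH; exact: card_unusedU1.
Qed.

Lemma acc_step s : acc s.
Proof.
have [n] := ubnP #|~: used s|.
elim: n s => [|n IHn] s bound; first by rewrite ltn0 in bound.
apply: (@acc_used (used s) _ s erefl) => s' lt.
by apply: IHn; apply: leq_trans lt _; rewrite -ltnS.
Qed.

Lemma light_step C u c T : exists s', step (Light C u c T) s'.
Proof.
case: (boolP [exists i, (i \notin u) && (light i \in c)]).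
  by case/existsP=> i /andP[iu ic]; eexists; apply: st_light iu ic.
move/existsPn=> none; eexists; apply: st_light_done => i iu.
by move: (none i); rewrite iu.
Qed.

Lemma split_overlap c C :
  (exists C1 p C2, C = C1 ++ p :: C2 /\ c :&: cattr p != set0) \/
  (forall p, List.In p C -> c :&: cattr p = set0).
Proof.
elim: C => [|q C IHC]; first by right.
have [cq0|cq] := eqVneq (c :&: cattr q) set0; last by left; exists [::], q, C.
case: IHC => [[C1 [p [C2 [-> cp]]]]|disj]; first by left; exists (q :: C1), p, C2.
by right=> p /= [<-|/disj].
Qed.

Lemma merge_step C u c T : exists s', step (Merge C u c T) s'.
Proof.
case: (split_overlap c C) => [[C1 [p [C2 [-> cp]]]]|disj].
  by eexists; apply: st_merge cp.
by eexists; apply: st_merge_done.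
Qed.

Lemma stuck_outer_used C u :
  invariant (Outer C u) -> (forall s', ~ step (Outer C u) s') -> u = setT.
Proof.
case=> _ _ lcC _ stuck; apply/setP => i; rewrite in_setT; apply/negPn/negP => iu.
by apply: (stuck _); apply: st_start (lcC i iu) iu.
Qed.

Lemma head_comp_closed p C :
  disjoint_comps (p :: C) -> covers (p :: C) setT -> closed (qedge att) (cattr p).
Proof.
case/andP=> /all_In disj _ cov x y /existsP[i e].
have [xi yi] : x \in attrset i /\ y \in attrset i.
  by case/orP: e => /andP[/eqP<- /eqP<-]; rewrite !inE !eqxx ?orbT.
have [q qC [/subsetP sq _]] := cov i (in_setT i).
case: qC => [->|/disj pq]; first by rewrite !sq.
by rewrite (disjointFl pq (sq _ xi)) (disjointFl pq (sq _ yi)).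
Qed.

Lemma outer_single_comp C :
  0 < l -> connected_query att -> invariant (Outer C setT) -> exists p, C = [:: p].
Proof.
move=> l_gt0 conn [wfC dC _ cov].
have [p0 p0C _] := cov (Ordinal l_gt0) (in_setT _).
case: C p0C wfC dC cov => [//|p [|q C]] _ wfC dC cov; first by exists p.
have [/subsetP sp /set0Pn[x xp] _ _] := wfC p (or_introl erefl).
have [/subsetP sq /set0Pn[y yq] _ _] := wfC q (or_intror (or_introl erefl)).
have yp := closed_connect (head_comp_closed dC cov) (conn x y (sp x xp) (sq y yq)).
case/andP: dC => /andP[pq _] _.
by move: (disjointFl pq yq); rewrite -yp xp.
Qed.

End Procedure.

Theorem mainTheorem1 (A : finType) (V : Type) (l : nat)
  (att : 'I_l -> A * A) (lightfst : 'I_l -> bool) (J : 'I_l -> V -> V -> Prop) :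
  0 < l ->
  (forall i, (att i).1 != (att i).2) ->
  connected_query att ->
  Acc (fun s' s => step att lightfst J s s') (init A V l) /\
  (forall s, reachable att lightfst J s ->
     (forall s', ~ step att lightfst J s s') ->
     exists c T u, s = Outer [:: Comp c T] u /\
       (forall t, T t <-> QJ att J t)).
Proof.
move=> l_gt0 _ conn; split; first exact: acc_step.
move=> s /reachable_invariant inv stuck.
case: s inv stuck => [C u|C u c T|C u c T] inv stuck; last first.
- by have [s' st] := merge_step att lightfst J C u c T; case: (stuck s').
- by have [s' st] := light_step att lightfst J C u c T; case: (stuck s').
have u_full := stuck_outer_used inv stuck; subst u.
have [[c T] eqC] := outer_single_comp l_gt0 conn inv; subst C.
exists c, T, setT; split=> //.
case: inv => /(_ (Comp c T) (or_introl erefl)) wf _ _ cov.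
by apply: wf_comp_QJ wf _ => i; have [q [<-|[]]] := cov i (in_setT i).
Qed.
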